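(* Consider the battery cost-minimization problem described in the context, with fixed data $t_0, T, K, Z, T_c, D$, $C_{\mathrm{ref}}\ge 0$, and let $S_1,S_2,S_3$ be the sets defined in the context. Suppose that at least one of the following holds: (i) $t_0 \in S_1$; or (ii) $S_3$ is empty; or (iii) $t_0 \notin S_1$ (equivalently $t_0\in S_2\cup S_3$), $S_3$ is nonempty, $S_1$ is nonempty, and there exists $t_1 \in S_1$ such that $t_1 < t_3$ for all $t_3 \in S_3$. Then either there is no feasible control, or the only feasible control is $u(t)=0$ for all $t\in[t_0,t_0+T]$.
   Context: Data: a time interval $[t_0,t_0+T]$ with $T>0$; a PV power profile $P_{\mathrm{pv}}(t)\ge 0$ and a (piecewise continuous) load profile $P_{\mathrm{load}}(t)$ on this interval; a time-of-use price $C_g(t)\ge 0$; constants $0<\eta_{\mathrm{pv}}\le 1$, $0<\eta_B\le 1$, $K>0$, $Z>0$, $T_c>0$, $D>0$, and a battery capacity $C_{\mathrm{ref}}\ge 0$. A control is a function $u$ on $[t_0,t_0+T]$; it determines states $E_B(t)$ (battery charge) and $\Delta C(t)$ (cumulative capacity loss) via $E_B(t_0)=0$, $\Delta C(t_0)=0$, $\frac{dE_B}{dt}=u(t)/\eta_B$ if $u(t)<0$ and $\frac{dE_B}{dt}=\eta_B u(t)$ otherwise; $\frac{d\Delta C}{dt}=-Z u(t)/\eta_B$ if $u(t)<0$ and $\frac{d\Delta C}{dt}=0$ otherwise. A control is feasible if for all $t\in[t_0,t_0+T]$: $E_B(t)\ge 0$; $E_B(t)+\Delta C(t)\le C_{\mathrm{ref}}$;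 $\eta_B u(t) T_c+\Delta C(t)\le C_{\mathrm{ref}}$ whenever $u(t)>0$; $-\frac{u(t)}{\eta_B}T_c+\Delta C(t)\le C_{\mathrm{ref}}$ whenever $u(t)<0$; and $P_{\mathrm{load}}(t)-\eta_{\mathrm{pv}}P_{\mathrm{pv}}(t)+u(t)\le D$. The cost of a feasible control is $\int_{t_0}^{t_0+T} C_g(\tau)\big(P_{\mathrm{load}}(\tau)-\eta_{\mathrm{pv}}P_{\mathrm{pv}}(\tau)+u(\tau)\big)\,d\tau + K\,\Delta C(t_0+T)$. Define $S_1=\{t\in[t_0,t_0+T] : D+\eta_{\mathrm{pv}}P_{\mathrm{pv}}(t)-P_{\mathrm{load}}(t)<0\}$, $S_2=\{t\in[t_0,t_0+T] : D+\eta_{\mathrm{pv}}P_{\mathrm{pv}}(t)-P_{\mathrm{load}}(t)=0\}$, $S_3=\{t\in[t_0,t_0+T] : D+\eta_{\mathrm{pv}}P_{\mathrm{pv}}(t)-P_{\mathrm{load}}(t)>0\}$. *)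

From Stdlib Require Import Reals List.
Open Scope R_scope.

Definition in_horizon (t0 T t : R) : Prop := t0 <= t <= t0 + T.

Definition has_deriv_within (f : R -> R) (a b x l : R) : Prop :=
  limit1_in (fun y => (f y - f x) / (y - x))
            (fun y => a <= y <= b /\ y <> x) l x.

Definition piecewise_continuous (f : R -> R) (a b : R) : Prop :=
  exists l : list R,
    (forall x, a <= x <= b -> ~ In x l ->
        limit1_in f (fun y => a <= y <= b) (f x) x) /\
    (forall x, In x l -> a <= x <= b ->
        (x < b -> exists L, limit1_in f (fun y => x < y <= b) L x) /\
        (a < x -> exists L, limit1_in f (fun y => a <= y < x) L x)).

Definition rate_EB (etaB v : R) : R :=
  if Rlt_dec v 0 then v / etaB else etaB * v.
Definition rate_dC (Z etaB v : R) : R :=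
  if Rlt_dec v 0 then - Z * v / etaB else 0.

Definition feasible (t0 T : R) (Ppv Pload : R -> R)
    (eta_pv etaB Z Tc D Cref : R) (u : R -> R) : Prop :=
  exists EB dC : R -> R,
    EB t0 = 0 /\ dC t0 = 0 /\
    (forall t, in_horizon t0 T t ->
        has_deriv_within EB t0 (t0 + T) t (rate_EB etaB (u t)) /\
        has_deriv_within dC t0 (t0 + T) t (rate_dC Z etaB (u t))) /\
    (forall t, in_horizon t0 T t ->
        0 <= EB t /\
        EB t + dC t <= Cref /\
        (u t > 0 -> etaB * u t * Tc + dC t <= Cref) /\
        (u t < 0 -> - (u t / etaB) * Tc + dC t <= Cref) /\
        Pload t - eta_pv * Ppv t + u t <= D).

Definition margin (Ppv Pload : R -> R) (eta_pv D t : R) : R :=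
  D + eta_pv * Ppv t - Pload t.
Definition S1 t0 T Ppv Pload eta_pv D (t : R) : Prop :=
  in_horizon t0 T t /\ margin Ppv Pload eta_pv D t < 0.
Definition S2 t0 T Ppv Pload eta_pv D (t : R) : Prop :=
  in_horizon t0 T t /\ margin Ppv Pload eta_pv D t = 0.
Definition S3 t0 T Ppv Pload eta_pv D (t : R) : Prop :=
  in_horizon t0 T t /\ margin Ppv Pload eta_pv D t > 0.

From Stdlib Require Import Reals Lra Psatz Classical.
Open Scope R_scope.

(* Feasibility forces u <= margin, while the charge E_B starts at 0 and must
   stay nonnegative.  On an interval [t0, c] where the margin is nonpositive,
   u <= 0, so E_B is nonincreasing, hence identically 0, and its derivative
   forces u = 0 there.  In case (i), u(t0) < 0 would make E_B negative right
   after t0; in case (iii), u vanishes on [t0, t1] although u(t1) <= margin(t1)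
   < 0; in case (ii), every feasible control vanishes, so the zero control is
   feasible as soon as some control is. *)

Section DerivativeWithin.

Variables (f : R -> R) (a b : R).

Lemma has_deriv_within_continuous x l : has_deriv_within f a b x l ->
  forall eps, 0 < eps -> exists delta, 0 < delta /\
    forall y, a <= y <= b -> Rabs (y - x) < delta -> Rabs (f y - f x) < eps.
Proof.
  intros Hd eps Heps.
  destruct (Hd 1 Rlt_0_1) as [alp [Halp Hq]]; simpl in Hq; unfold R_dist in Hq.
  set (L := Rabs l + 1).
  assert (HL : 0 < L) by (pose proof (Rabs_pos l); unfold L; lra).
  exists (Rmin alp (eps / L)).
  split; [apply Rmin_pos; [lra | apply Rdiv_lt_0_compat; lra] |].
  intros y Hy Hyx.
  pose proof (Rmin_l alp (eps / L)); pose proof (Rmin_r alp (eps / L)).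
  destruct (Req_dec y x) as [-> | Hne]; [rewrite Rminus_diag, Rabs_R0; lra |].
  assert (Hquot : Rabs ((f y - f x) / (y - x)) < L).
  { pose proof (Rabs_triang_inv ((f y - f x) / (y - x)) l).
    assert (Hnear : Rabs (y - x) < alp) by lra.
    specialize (Hq y (conj (conj Hy Hne) Hnear)). unfold L; lra. }
  replace (f y - f x) with ((f y - f x) / (y - x) * (y - x)) by (field; lra).
  rewrite Rabs_mult.
  apply Rle_lt_trans with (L * Rabs (y - x)).
  - apply Rmult_le_compat_r; [apply Rabs_pos | lra].
  - replace eps with (L * (eps / L)) by (field; lra).
    apply Rmult_lt_compat_l; lra.
Qed.

Lemma has_deriv_within_interior x l : has_deriv_within f a b x l -> a < x < b ->
  derivable_pt_lim f x l.
Proof.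
  intros Hd Hx eps Heps.
  destruct (Hd eps Heps) as [alp [Halp Hq]]; simpl in Hq; unfold R_dist in Hq.
  assert (Hm : 0 < Rmin alp (Rmin (x - a) (b - x))) by (repeat apply Rmin_pos; lra).
  exists (mkposreal _ Hm). intros h Hh Hlt; simpl in Hlt.
  pose proof (Rmin_l alp (Rmin (x - a) (b - x))).
  pose proof (Rmin_r alp (Rmin (x - a) (b - x))).
  pose proof (Rmin_l (x - a) (b - x)); pose proof (Rmin_r (x - a) (b - x)).
  pose proof (Rle_abs h); pose proof (Rle_abs (- h)); rewrite Rabs_Ropp in *.
  specialize (Hq (x + h)). replace (x + h - x) with h in Hq by ring.
  apply Hq. repeat split; lra.
Qed.

Lemma has_deriv_within_eq0 x l : has_deriv_within f a b x l ->
  (forall alp, 0 < alp ->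
     exists y, a <= y <= b /\ y <> x /\ Rabs (y - x) < alp /\ f y = f x) ->
  l = 0.
Proof.
  intros Hd Hconst. destruct (Req_dec l 0) as [| Hl]; [assumption | exfalso].
  destruct (Hd (Rabs l) (Rabs_pos_lt _ Hl)) as [alp [Halp Hq]].
  simpl in Hq; unfold R_dist in Hq.
  destruct (Hconst alp Halp) as [y [Hy [Hne [Hyx Hfy]]]].
  specialize (Hq y (conj (conj Hy Hne) Hyx)).
  rewrite Hfy, Rminus_diag in Hq. unfold Rdiv in Hq.
  rewrite Rmult_0_l, Rminus_0_l, Rabs_Ropp in Hq. lra.
Qed.

Lemma has_deriv_within_vanishing c x l : a < c <= b ->
  (forall y, a <= y <= c -> f y = 0) -> a <= x <= c ->
  has_deriv_within f a b x l -> l = 0.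
Proof.
  intros Hc Hf Hx Hd. apply (has_deriv_within_eq0 x); [exact Hd |].
  intros alp Halp.
  destruct (Req_dec x a) as [-> | Hxa].
  - pose proof (Rmin_l alp (c - a)); pose proof (Rmin_r alp (c - a)).
    assert (0 < Rmin alp (c - a)) by (apply Rmin_pos; lra).
    exists (a + Rmin alp (c - a) / 2).
    rewrite Rabs_right by lra; rewrite !Hf by lra. repeat split; lra.
  - pose proof (Rmin_l alp (x - a)); pose proof (Rmin_r alp (x - a)).
    assert (0 < Rmin alp (x - a)) by (apply Rmin_pos; lra).
    exists (x - Rmin alp (x - a) / 2).
    rewrite Rabs_left by lra; rewrite !Hf by lra. repeat split; lra.
Qed.

Lemma has_deriv_within_decrease_start l : a < b -> l < 0 ->
  has_deriv_within f a b a l -> exists y, a < y <= b /\ f y < f a.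
Proof.
  intros Hab Hl Hd.
  destruct (Hd (- l) ltac:(lra)) as [alp [Halp Hq]]; simpl in Hq; unfold R_dist in Hq.
  pose proof (Rmin_l alp (b - a)); pose proof (Rmin_r alp (b - a)).
  assert (0 < Rmin alp (b - a)) by (apply Rmin_pos; lra).
  set (y := a + Rmin alp (b - a) / 2).
  exists y. split; [unfold y; lra |].
  assert (Hquot : (f y - f a) / (y - a) < 0).
  { assert (Rabs ((f y - f a) / (y - a) - l) < - l).
    { apply Hq. unfold y; repeat split; try lra. rewrite Rabs_right; lra. }
    pose proof (Rle_abs ((f y - f a) / (y - a) - l)). lra. }
  assert (f y - f a = (f y - f a) / (y - a) * (y - a)) by (field; unfold y; lra).
  assert ((f y - f a) / (y - a) * (y - a) < 0)
    by (apply Rmult_neg_pos; [lra | unfold y; lra]).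
  lra.
Qed.

(* Continuity at the endpoints transfers the mean-value bound, valid only
   strictly inside (a, c), to the closed interval. *)
Lemma has_deriv_within_nonincreasing c g : c <= b ->
  (forall x, a <= x <= c -> has_deriv_within f a b x (g x) /\ g x <= 0) ->
  forall x y, a <= x <= y -> y <= c -> f y <= f x.
Proof.
  intros Hcb Hd.
  assert (Hinside : forall x y, a < x <= y -> y < c -> f y <= f x).
  { intros x y Hxy Hyc. destruct (Req_dec x y) as [-> | Hne]; [lra |].
    destruct (MVT_cor2 f g x y) as [z [Hmvt Hz]]; [lra | |].
    - intros z Hz. apply (has_deriv_within_interior z); [apply Hd |]; lra.
    - pose proof (proj2 (Hd z ltac:(lra))). nra. }
  intros x y Hxy Hyc. destruct (Req_dec x y) as [-> | Hne]; [lra |].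
  apply Rnot_lt_le; intro Hlt.
  set (eps := (f y - f x) / 2).
  destruct (has_deriv_within_continuous x (g x) (proj1 (Hd x ltac:(lra))) eps
              ltac:(unfold eps; lra)) as [dx [Hdx Hcx]].
  destruct (has_deriv_within_continuous y (g y) (proj1 (Hd y ltac:(lra))) eps
              ltac:(unfold eps; lra)) as [dy [Hdy Hcy]].
  pose proof (Rmin_l (Rmin dx dy) ((y - x) / 2)).
  pose proof (Rmin_r (Rmin dx dy) ((y - x) / 2)).
  pose proof (Rmin_l dx dy); pose proof (Rmin_r dx dy).
  set (m := Rmin (Rmin dx dy) ((y - x) / 2)) in *.
  assert (Hm : 0 < m) by (unfold m; repeat apply Rmin_pos; lra).
  assert (Hnx : Rabs (x + m / 2 - x) < dx) by (rewrite Rabs_right; lra).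
  assert (Hny : Rabs (y - m / 2 - y) < dy) by (rewrite Rabs_left; lra).
  specialize (Hcx (x + m / 2) ltac:(lra) Hnx); apply Rabs_def2 in Hcx.
  specialize (Hcy (y - m / 2) ltac:(lra) Hny); apply Rabs_def2 in Hcy.
  assert (f (y - m / 2) <= f (x + m / 2)) by (apply Hinside; lra).
  unfold eps in *; lra.
Qed.

End DerivativeWithin.

Lemma rate_EB_eq0 e v : 0 < e -> rate_EB e v = 0 -> v = 0.
Proof.
  unfold rate_EB; intros He Hr; destruct (Rlt_dec v 0).
  - assert (v / e < 0) by (apply Rdiv_neg_pos; lra). lra.
  - destruct (Rmult_integral _ _ Hr); lra.
Qed.

Lemma rate_EB_le0 e v : 0 < e -> v <= 0 -> rate_EB e v <= 0.
Proof.
  unfold rate_EB; intros He Hv; destruct (Rlt_dec v 0).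
  - assert (v / e < 0) by (apply Rdiv_neg_pos; lra). lra.
  - replace v with 0 by lra. lra.
Qed.

Lemma rate_EB_lt0 e v : 0 < e -> v < 0 -> rate_EB e v < 0.
Proof.
  unfold rate_EB; intros He Hv; destruct (Rlt_dec v 0).
  - apply Rdiv_neg_pos; lra.
  - lra.
Qed.

Section Feasibility.

Variables (t0 T : R) (Ppv Pload : R -> R) (eta_pv etaB Z Tc D Cref : R).
Hypothesis HetaB : 0 < etaB.

Lemma feasible_le_margin u t :
  feasible t0 T Ppv Pload eta_pv etaB Z Tc D Cref u -> in_horizon t0 T t ->
  u t <= margin Ppv Pload eta_pv D t.
Proof.
  intros [EB [dC [_ [_ [_ Hcons]]]]] Ht.
  destruct (Hcons t Ht) as [_ [_ [_ [_ Hgrid]]]]. unfold margin; lra.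
Qed.

Lemma feasible_ext u v :
  feasible t0 T Ppv Pload eta_pv etaB Z Tc D Cref u ->
  (forall t, in_horizon t0 T t -> u t = v t) ->
  feasible t0 T Ppv Pload eta_pv etaB Z Tc D Cref v.
Proof.
  intros [EB [dC [HE0 [HC0 [Hd Hcons]]]]] Huv.
  exists EB, dC. split; [exact HE0 | split; [exact HC0 | split]].
  - intros t Ht. rewrite <- (Huv t Ht). apply Hd, Ht.
  - intros t Ht. rewrite <- (Huv t Ht). apply Hcons, Ht.
Qed.

Lemma feasible_start_ge0 u : 0 < T ->
  feasible t0 T Ppv Pload eta_pv etaB Z Tc D Cref u -> 0 <= u t0.
Proof.
  intros HT [EB [dC [HE0 [_ [Hd Hcons]]]]].
  apply Rnot_lt_le; intro Hu.
  assert (Ht0 : in_horizon t0 T t0) by (unfold in_horizon; lra).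
  destruct (has_deriv_within_decrease_start EB t0 (t0 + T) (rate_EB etaB (u t0)))
    as [y [Hy HEy]]; [lra | apply rate_EB_lt0; lra | apply (Hd t0 Ht0) |].
  destruct (Hcons y ltac:(unfold in_horizon; lra)). lra.
Qed.

Lemma feasible_eq0_on_nonpositive_margin u c : t0 < c <= t0 + T ->
  feasible t0 T Ppv Pload eta_pv etaB Z Tc D Cref u ->
  (forall t, t0 <= t <= c -> margin Ppv Pload eta_pv D t <= 0) ->
  forall t, t0 <= t <= c -> u t = 0.
Proof.
  intros Hc Hu Hmargin.
  assert (Hle0 : forall t, t0 <= t <= c -> u t <= 0).
  { intros t Ht. pose proof (Hmargin t Ht).
    pose proof (feasible_le_margin u t Hu ltac:(unfold in_horizon; lra)). lra. }
  destruct Hu as [EB [dC [HE0 [_ [Hd Hcons]]]]].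
  assert (Hder : forall t, t0 <= t <= c ->
            has_deriv_within EB t0 (t0 + T) t (rate_EB etaB (u t)))
    by (intros t Ht; apply Hd; unfold in_horizon; lra).
  assert (Hcharge0 : forall t, t0 <= t <= c -> EB t = 0).
  { intros t Ht.
    assert (EB t <= EB t0).
    { apply (has_deriv_within_nonincreasing EB t0 (t0 + T) c
               (fun s => rate_EB etaB (u s))); try lra.
      intros s Hs. split; [apply Hder, Hs | apply rate_EB_le0; [lra | apply Hle0, Hs]]. }
    destruct (Hcons t ltac:(unfold in_horizon; lra)). lra. }
  intros t Ht. apply (rate_EB_eq0 etaB); [exact HetaB |].
  exact (has_deriv_within_vanishing EB t0 (t0 + T) c t _ Hc Hcharge0 Ht (Hder t Ht)).
Qed.

End Feasibility.

Theorem proposition1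
  (t0 T : R) (Ppv Pload Cg : R -> R)
  (eta_pv etaB K Z Tc D Cref : R)
  (HT : T > 0)
  (HPpv : forall t, in_horizon t0 T t -> Ppv t >= 0)
  (HPload : piecewise_continuous Pload t0 (t0 + T))
  (HCg : forall t, in_horizon t0 T t -> Cg t >= 0)
  (Hetapv : 0 < eta_pv <= 1) (HetaB : 0 < etaB <= 1)
  (HK : K > 0) (HZ : Z > 0) (HTc : Tc > 0) (HD : D > 0) (HCref : Cref >= 0)
  (Hcase :
     S1 t0 T Ppv Pload eta_pv D t0 \/
     (~ exists t, S3 t0 T Ppv Pload eta_pv D t) \/
     (~ S1 t0 T Ppv Pload eta_pv D t0 /\
      (exists t, S3 t0 T Ppv Pload eta_pv D t) /\
      (exists t, S1 t0 T Ppv Pload eta_pv D t) /\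
      (exists t1, S1 t0 T Ppv Pload eta_pv D t1 /\
         forall t3, S3 t0 T Ppv Pload eta_pv D t3 -> t1 < t3))) :
  (forall u : R -> R, ~ feasible t0 T Ppv Pload eta_pv etaB Z Tc D Cref u) \/
  (feasible t0 T Ppv Pload eta_pv etaB Z Tc D Cref (fun _ => 0) /\
   forall u : R -> R, feasible t0 T Ppv Pload eta_pv etaB Z Tc D Cref u ->
     forall t, in_horizon t0 T t -> u t = 0).
Proof.
  assert (HeB : 0 < etaB) by lra.
  destruct Hcase as [[Ht0 Hneg] | [HnoS3 | [HnotS1 [_ [_ [t1 [[Ht1 Hneg] Hbefore]]]]]]].
  - left; intros u Hu.
    pose proof (feasible_start_ge0 t0 T Ppv Pload eta_pv etaB Z Tc D Cref HeB u HT Hu).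
    pose proof (feasible_le_margin t0 T Ppv Pload eta_pv etaB Z Tc D Cref u t0 Hu Ht0).
    lra.
  - assert (Hzero : forall u, feasible t0 T Ppv Pload eta_pv etaB Z Tc D Cref u ->
                      forall t, in_horizon t0 T t -> u t = 0).
    { intros u Hu.
      apply (feasible_eq0_on_nonpositive_margin t0 T Ppv Pload eta_pv etaB Z Tc D Cref
               HeB u (t0 + T)); [lra | exact Hu |].
      intros t Ht. apply Rnot_lt_le; intro Hpos. apply HnoS3. exists t; split; auto. }
    destruct (classic (exists u, feasible t0 T Ppv Pload eta_pv etaB Z Tc D Cref u))
      as [[u Hu] | Hnone].
    + right; split; [| exact Hzero].
      apply (feasible_ext t0 T Ppv Pload eta_pv etaB Z Tc D Cref u _ Hu), Hzero, Hu.
    + left; intros u Hu; apply Hnone; exists u; exact Hu.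
  - left; intros u Hu. unfold in_horizon in Ht1.
    assert (Ht01 : t0 < t1).
    { destruct (Req_dec t1 t0) as [-> | Hne]; [| lra].
      exfalso; apply HnotS1; split; [unfold in_horizon; lra | exact Hneg]. }
    assert (Hu1 : u t1 = 0).
    { apply (feasible_eq0_on_nonpositive_margin t0 T Ppv Pload eta_pv etaB Z Tc D Cref
               HeB u t1); [lra | exact Hu | | lra].
      intros t Ht. apply Rnot_lt_le; intro Hpos.
      assert (t1 < t) by (apply Hbefore; split; [unfold in_horizon |]; lra). lra. }
    pose proof (feasible_le_margin t0 T Ppv Pload eta_pv etaB Z Tc D Cref u t1 Hu
                  ltac:(unfold in_horizon; lra)).
    lra.
Qed.
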